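(* Assume the standing hypotheses described in the context. Let $(\bar S,\bar w^0,\bar w,\bar\alpha,\bar y^0,\bar y,\bar\beta)$ be a canonical extremal for the space-time problem with multiplier $(p_0,p,\pi,\lambda)$. If $\pi=0$ and $\lambda\,\ell^e(\bar y(s),0,\pm\mathbf e_i,a)=0$ for all $s\in[0,\bar S]$, all $i=1,\dots,m_1$ (and all $a\in A$), then $p(s)\cdot g_i(\bar y(s))=0$ for all $s\in[0,\bar S]$ and all $i=1,\dots,m_1$.
   Context: Let $n,m,q\ge1$, $m=m_1+m_2$, $\mathbf e_i$ the $i$-th canonical basis vector of $\mathbb{R}^m$. Standing hypotheses: $\mathfrak T\subset\mathbb{R}_+\times\mathbb{R}^n$ closed target; $A\subset\mathbb{R}^q$ compact; $\mathcal C=\mathcal C_1\times\mathcal C_2\subseteq\mathbb{R}^m$ with $\mathcal C_1\subseteq\mathbb{R}^{m_1}$ a closed cone containing the lines $\mathbb{R}\mathbf e_i$, $i\le m_1$, and $\mathcal C_2\subseteq\mathbb{R}^{m_2}$ a closed cone containing no line; $f:\mathbb{R}^n\times A\to\mathbb{R}^n$ continuous with continuous $x$-partials; $g_1,\dots,g_m:\mathbb{R}^n\to\mathbb{R}^n$ of class $C^1$; $\ell(x,u,a)=\ell_0(x,a)+\ell_1(x,u)$ with $\ell_0$ and the recession function $\hat\ell_1(x,w^0,w):=\lim_{r\to w^0}r\ell_1(x,w/r)$ (on $\mathbb{R}^n\times\mathbb{R}_+\times\mathcal C$) continuous with continuous $x$-partials; $\Psi$ of class $C^1$; $K\in(0,+\infty]$,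 $\check x\in\mathbb{R}^n$; $\ell^e(x,w^0,w,a):=\ell_0(x,a)w^0+\hat\ell_1(x,w^0,w)$. A space-time process is $(S,w^0,w,\alpha,y^0,y,\beta)$ with $S>0$, $(w^0,w,\alpha)\in L^\infty([0,S],\mathbb{R}_+\times\mathcal C\times A)$, $\operatorname{ess\,inf}(w^0+|w|)>0$, and $(y^0,y,\beta)$ solving $\dot y^0=w^0$, $\dot y=f(y,\alpha)w^0+\sum_i g_i(y)w^i$, $\dot\beta=|w|$, $(y^0,y,\beta)(0)=(0,\check x,0)$; canonical if $w^0+|w|=1$ a.e. Hamiltonians: $W=\{(w^0,w)\in\mathbb{R}_+\times\mathcal C:w^0+|w|=1\}$; $H(x,p_0,p,\pi,\lambda,w^0,w,a)=p_0w^0+p\cdot(f(x,a)w^0+\sum_i g_i(x)w^i)+\pi|w|-\lambda\ell^e(x,w^0,w,a)$; $\mathbf H=\max_{W\times A}H$. Extremal with multiplier: a space-time process with, for some Boltyanski approximating cone $\Gamma$ of $\mathfrak T$ at $(\bar y^0,\bar y)(\bar S)$, some $(p_0,p,\pi,\lambda)\in\mathbb{R}\times AC([0,\bar S],\mathbb{R}^n)\times(-\infty,0]\times[0,\infty)$ with $(p_0,p,\lambda)\ne(0,0,0)$; $(p_0,p(\bar S))\in-\lambda\nabla_{(t,x)}\Psi((\bar y^0,\bar y)(\bar S))-\Gamma^\perp$, and $\pi=0$ if $\bar\beta(\bar S)<K$; $\dot p=-\partial_xH(\bar y,p_0,p,\pi,\lambda,\bar w^0,\bar w,\bar\alpha)$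 a.e.; $H(\bar y,p_0,p,\pi,\lambda,\bar w^0,\bar w,\bar\alpha)=\mathbf H(\bar y,p_0,p,\pi,\lambda)$ a.e.; $\mathbf H(\bar y(s),p_0,p(s),\pi,\lambda)=0$ for all $s$. (Boltyanski approximating cone of $Z\subseteq\mathbb{R}^N$ at $z$: a convex cone $LC$ with $C\subset\mathbb{R}^M$ a convex cone, $L$ linear, and a continuous $F:V\cap C\to Z$, $V$ a neighborhood of $0$, $F(v)=z+Lv+o(|v|)$; $X^\perp=\{p:p\cdot x\le0\ \forall x\in X\}$.) *)

(* an abstract R : realType, vectors of R^k are
   row vectors 'rV[R]_k, controls/time functions are functions R -> _ that
   are only looked at on [0,S]. *)
From mathcomp Require Import all_boot all_order all_algebra.
From mathcomp Require Import all_classical all_reals all_analysis.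
Import numFieldNormedType.Exports.
Import Order.TTheory GRing.Theory Num.Theory.

Set Implicit Arguments.
Unset Strict Implicit.
Unset Printing Implicit Defensive.

Local Open Scope classical_set_scope.
Local Open Scope ring_scope.

Section Defs.
Context {R : realType}.

Definition dotv {k : nat} (u v : 'rV[R]_k) : R := \sum_(i < k) u 0 i * v 0 i.
Definition enorm {k : nat} (u : 'rV[R]_k) : R := Num.sqrt (dotv u u).

Definition ev {k : nat} (i : 'I_k) : 'rV[R]_k := \row_(j < k) (i == j)%:R.

Definition is_cone {k : nat} (K : set 'rV[R]_k) :=
  forall (t : R) x, 0 <= t -> K x -> K (t *: x).
Definition is_convex_cone {k : nat} (K : set 'rV[R]_k) :=
  K 0 /\ is_cone K /\ (forall x y, K x -> K y -> K (x + y)).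
Definition contains_line {k : nat} (K : set 'rV[R]_k) :=
  exists y v : 'rV[R]_k, v != 0 /\ forall t : R, K (y + t *: v).

Definition inC {m1 m2 : nat} (C1 : set 'rV[R]_m1) (C2 : set 'rV[R]_m2)
  (w : 'rV[R]_(m1 + m2)) := C1 (lsubmx w) /\ C2 (rsubmx w).

Definition inW {m1 m2 : nat} (C1 : set 'rV[R]_m1) (C2 : set 'rV[R]_m2)
  (w0 : R) (w : 'rV[R]_(m1 + m2)) := 0 <= w0 /\ inC C1 C2 w /\ w0 + enorm w = 1.

Definition C1fun {V W : normedModType R} (F : V -> W) :=
  (forall x, differentiable F x) /\ (forall v, continuous (fun x => 'd F x v)).

Definition cont_partials_x {Y : topologicalType} {k : nat} {W : normedModType R}
  (F : 'rV[R]_k -> Y -> W) (D : set Y) :=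
  (forall y, D y -> forall x (j : 'I_k), derivable (F ^~ y) x (ev j)) /\
  (forall j : 'I_k, {within [set z : 'rV[R]_k * Y | D z.2],
      continuous (fun z : 'rV[R]_k * Y => 'D_(ev j) (F ^~ z.2) z.1)}).

Definition abs_cont_on {V : normedModType R} (a b : R) (F : R -> V) :=
  forall eps : R, 0 < eps -> exists2 delta : R, 0 < delta &
    forall (N : nat) (s t : 'I_N -> R),
      (forall k, a <= s k /\ s k <= t k /\ t k <= b) ->
      (forall k l, k != l -> t k <= s l \/ t l <= s k) ->
      \sum_(k < N) (t k - s k) < delta ->
      \sum_(k < N) `|F (t k) - F (s k)| < eps.

Definition meas_rV {k : nat} (S : R) (u : R -> 'rV[R]_k) :=
  forall j : 'I_k, measurable_fun `[0, S] (fun s => u s 0 j).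

Definition ess_bounded {V : normedModType R} (S : R) (u : R -> V) :=
  exists M : R, {ae (@lebesgue_measure R), forall s, 0 <= s <= S -> `|u s| <= M}.


End Defs.

Section Problem.
Context {R : realType} {n q m1 m2 : nat}.
Local Notation m := (m1 + m2)%N.

Definition lext (l0 : 'rV[R]_n -> 'rV[R]_q -> R)
  (l1h : 'rV[R]_n -> R -> 'rV[R]_m -> R)
  (x : 'rV[R]_n) (w0 : R) (w : 'rV[R]_m) (a : 'rV[R]_q) : R :=
  l0 x a * w0 + l1h x w0 w.

Definition Ham (f : 'rV[R]_n -> 'rV[R]_q -> 'rV[R]_n)
  (g : 'I_m -> 'rV[R]_n -> 'rV[R]_n)
  (l0 : 'rV[R]_n -> 'rV[R]_q -> R) (l1h : 'rV[R]_n -> R -> 'rV[R]_m -> R)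
  (x : 'rV[R]_n) (p0 : R) (p : 'rV[R]_n) (pi lam : R)
  (w0 : R) (w : 'rV[R]_m) (a : 'rV[R]_q) : R :=
  p0 * w0 + dotv p (w0 *: f x a + \sum_(i < m) w 0 i *: g i x)
  + pi * enorm w - lam * lext l0 l1h x w0 w a.

Definition dxHam f g l0 l1h (x : 'rV[R]_n) p0 p pi lam w0 w a : 'rV[R]_n :=
  \row_(j < n) 'D_(ev j) (fun x' => Ham f g l0 l1h x' p0 p pi lam w0 w a) x.

(* "bold H(x,p0,p,pi,lambda) = v", where bold H = max_{W x A} H
   (v is attained on W x A and is an upper bound of H on W x A) *)
Definition Hmax_is (C1 : set 'rV[R]_m1) (C2 : set 'rV[R]_m2) (A : set 'rV[R]_q)
  f g l0 l1h (x : 'rV[R]_n) p0 p pi lam (v : R) :=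
  (exists w0 w a, [/\ inW C1 C2 w0 w, A a & Ham f g l0 l1h x p0 p pi lam w0 w a = v])
  /\ (forall w0 w a, inW C1 C2 w0 w -> A a ->
        Ham f g l0 l1h x p0 p pi lam w0 w a <= v).

Definition space_time_process (C1 : set 'rV[R]_m1) (C2 : set 'rV[R]_m2)
  (A : set 'rV[R]_q) (f : 'rV[R]_n -> 'rV[R]_q -> 'rV[R]_n)
  (g : 'I_m -> 'rV[R]_n -> 'rV[R]_n) (xc : 'rV[R]_n)
  (S : R) (w0 : R -> R) (w : R -> 'rV[R]_m) (al : R -> 'rV[R]_q)
  (y0 : R -> R) (y : R -> 'rV[R]_n) (be : R -> R) :=
  0 < S /\
  (* (w0,w,alpha) in L^infty([0,S], R_+ x C x A) *)
  [/\ measurable_fun `[0, S] w0, meas_rV S w & meas_rV S al] /\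
  [/\ ess_bounded S w0, ess_bounded S w & ess_bounded S al] /\
  {ae (@lebesgue_measure R), forall s, 0 <= s <= S ->
     [/\ 0 <= w0 s, inC C1 C2 (w s) & A (al s)]} /\
  (* ess inf (w0 + |w|) > 0 *)
  (exists2 c : R, 0 < c & {ae (@lebesgue_measure R), forall s, 0 <= s <= S ->
     c <= w0 s + enorm (w s)}) /\
  [/\ abs_cont_on 0 S y0, abs_cont_on 0 S y & abs_cont_on 0 S be] /\
  {ae (@lebesgue_measure R), forall s, 0 <= s <= S ->
     [/\ derivable y0 s 1 /\ 'D_1 y0 s = w0 s,
         derivable y s 1 /\
           'D_1 y s = w0 s *: f (y s) (al s) + \sum_(i < m) w s 0 i *: g i (y s) &
         derivable be s 1 /\ 'D_1 be s = enorm (w s)]} /\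
  [/\ y0 0 = 0, y 0 = xc & be 0 = 0].

Definition canonical_process (S : R) (w0 : R -> R) (w : R -> 'rV[R]_m) :=
  {ae (@lebesgue_measure R), forall s, 0 <= s <= S -> w0 s + enorm (w s) = 1}.

Definition boltyanski_cone (Z : set (R * 'rV[R]_n)) (z : R * 'rV[R]_n)
  (G : set (R * 'rV[R]_n)) :=
  exists (M : nat) (C : set 'rV[R]_M) (L : 'rV[R]_M -> R * 'rV[R]_n)
         (V : set 'rV[R]_M) (F : 'rV[R]_M -> R * 'rV[R]_n),
    is_convex_cone C /\
    (forall (c : R) u v, L (c *: u + v) = c *: L u + L v) /\
    nbhs (0 : 'rV[R]_M) V /\
    {within V `&` C, continuous F} /\
    F @` (V `&` C) `<=` Z /\
    (forall eps : R, 0 < eps -> exists2 delta : R, 0 < delta &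
       forall v, V v -> C v -> `|v| < delta -> `|F v - z - L v| <= eps * `|v|) /\
    G = L @` C.

Definition polar (X : set (R * 'rV[R]_n)) : set (R * 'rV[R]_n) :=
  [set pp | forall xx, X xx -> pp.1 * xx.1 + dotv pp.2 xx.2 <= 0].

Definition grad_tx (Psi : R * 'rV[R]_n -> R) (z : R * 'rV[R]_n) : R * 'rV[R]_n :=
  ('D_((1, 0) : R * 'rV[R]_n) Psi z,
   \row_(j < n) 'D_(((0, ev j)) : R * 'rV[R]_n) Psi z).

Definition extremal_with_multiplier (T : set (R * 'rV[R]_n))
  (C1 : set 'rV[R]_m1) (C2 : set 'rV[R]_m2) (A : set 'rV[R]_q)
  (f : 'rV[R]_n -> 'rV[R]_q -> 'rV[R]_n) (g : 'I_m -> 'rV[R]_n -> 'rV[R]_n)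
  (l0 : 'rV[R]_n -> 'rV[R]_q -> R) (l1h : 'rV[R]_n -> R -> 'rV[R]_m -> R)
  (Psi : R * 'rV[R]_n -> R) (K : \bar R) (xc : 'rV[R]_n)
  (S : R) (w0 : R -> R) (w : R -> 'rV[R]_m) (al : R -> 'rV[R]_q)
  (y0 : R -> R) (y : R -> 'rV[R]_n) (be : R -> R)
  (p0 : R) (p : R -> 'rV[R]_n) (pi lam : R) :=
  space_time_process C1 C2 A f g xc S w0 w al y0 y be /\
  (exists G, boltyanski_cone T (y0 S, y S) G /\
     exists2 gam, polar G gam &
       (p0, p S) = (- lam) *: grad_tx Psi (y0 S, y S) - gam) /\
  [/\ abs_cont_on 0 S p, pi <= 0, 0 <= lam &
      ~ [/\ p0 = 0, (forall s, 0 <= s <= S -> p s = 0) & lam = 0]] /\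
  (((be S)%:E < K)%E -> pi = 0) /\
  {ae (@lebesgue_measure R), forall s, 0 <= s <= S ->
     derivable p s 1 /\
     'D_1 p s = - dxHam f g l0 l1h (y s) p0 (p s) pi lam (w0 s) (w s) (al s)} /\
  {ae (@lebesgue_measure R), forall s, 0 <= s <= S ->
     Hmax_is C1 C2 A f g l0 l1h (y s) p0 (p s) pi lam
       (Ham f g l0 l1h (y s) p0 (p s) pi lam (w0 s) (w s) (al s))} /\
  (forall s, 0 <= s <= S -> Hmax_is C1 C2 A f g l0 l1h (y s) p0 (p s) pi lam 0).

Definition standing_hyps (T : set (R * 'rV[R]_n))
  (C1 : set 'rV[R]_m1) (C2 : set 'rV[R]_m2) (A : set 'rV[R]_q)
  (f : 'rV[R]_n -> 'rV[R]_q -> 'rV[R]_n) (g : 'I_m -> 'rV[R]_n -> 'rV[R]_n)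
  (l0 : 'rV[R]_n -> 'rV[R]_q -> R) (l1 : 'rV[R]_n -> 'rV[R]_m -> R)
  (l1h : 'rV[R]_n -> R -> 'rV[R]_m -> R)
  (Psi : R * 'rV[R]_n -> R) (K : \bar R) :=
  [/\ (0 < n)%N, (0 < q)%N & (0 < m)%N] /\
  [/\ closed T, T `<=` [set z | 0 <= z.1] & compact A] /\
  [/\ closed C1, is_cone C1 & forall (i : 'I_m1) (t : R), C1 (t *: ev i)] /\
  [/\ closed C2, is_cone C2 & ~ contains_line C2] /\
  [/\ {within [set z : 'rV[R]_n * 'rV[R]_q | A z.2], continuous (fun z => f z.1 z.2)},
      cont_partials_x f A &
      forall i : 'I_m, C1fun (g i)] /\
  [/\ {within [set z : 'rV[R]_n * 'rV[R]_q | A z.2], continuous (fun z => l0 z.1 z.2)},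
      cont_partials_x l0 A,
      (* hat l1 is the recession function of l1 *)
      (forall x (w0 : R) w, 0 <= w0 -> inC C1 C2 w ->
         (fun r : R => r * l1 x (r^-1 *: w)) r
           @[r --> within (fun r : R => 0 < r) w0^'] --> l1h x w0 w),
      {within [set z : 'rV[R]_n * (R * 'rV[R]_m) | 0 <= z.2.1 /\ inC C1 C2 z.2.2],
         continuous (fun z => l1h z.1 z.2.1 z.2.2)} &
      cont_partials_x (fun x (v : R * 'rV[R]_m) => l1h x v.1 v.2)
        [set v | 0 <= v.1 /\ inC C1 C2 v.2]] /\
  C1fun Psi /\ (0 < K)%E.

End Problem.

(** At each time the maximized Hamiltonian vanishes along the extremal. With
    [pi = 0], the pure-impulse controls [(0, +e_i)] and [(0, -e_i)], i <= m1,
    lie in W (the cone C1 contains the coordinate lines) and cost nothing, so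
    their Hamiltonian values [p . g_i] and [- p . g_i] are both bounded by the
    maximum 0; hence [p . g_i = 0]. *)
From mathcomp Require Import all_boot all_order all_algebra.
From mathcomp Require Import all_classical all_reals all_analysis.
Import numFieldNormedType.Exports.
Import Order.TTheory GRing.Theory Num.Theory.
Local Open Scope classical_set_scope.
Local Open Scope ring_scope.

Section EuclideanRows.
Context {R : realType}.

Lemma dotvZr {k : nat} (c : R) (u v : 'rV[R]_k) : dotv u (c *: v) = c * dotv u v.
Proof. by rewrite /dotv mulr_sumr; apply: eq_bigr => i _; rewrite mxE mulrCA. Qed.

Lemma dotvZl {k : nat} (c : R) (u v : 'rV[R]_k) : dotv (c *: u) v = c * dotv u v.
Proof. by rewrite /dotv mulr_sumr; apply: eq_bigr => i _; rewrite mxE mulrA. Qed.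

Lemma enormZ {k : nat} (c : R) (u : 'rV[R]_k) : enorm (c *: u) = `|c| * enorm u.
Proof. by rewrite /enorm dotvZl dotvZr mulrA -expr2 sqrtrM ?sqr_ge0 ?sqrtr_sqr. Qed.

Lemma enorm_ev {k : nat} (j : 'I_k) : enorm (ev j : 'rV[R]_k) = 1.
Proof.
rewrite /enorm /dotv (bigD1 j) //= !mxE eqxx mulr1 big1 ?addr0 ?sqrtr1 //.
by move=> i /negbTE ji; rewrite !mxE eq_sym ji mulr0.
Qed.

Lemma sum_evZ {k : nat} {V : lmodType R} (c : R) (j : 'I_k) (G : 'I_k -> V) :
  \sum_(i < k) (c *: ev j : 'rV[R]_k) 0 i *: G i = c *: G j.
Proof.
rewrite (bigD1 j) //= !mxE eqxx mulr1 big1 ?addr0 // => i /negbTE ji.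
by rewrite !mxE eq_sym ji mulr0 scale0r.
Qed.

Lemma lsubmx_ev_lshift {m1 m2 : nat} (i : 'I_m1) :
  lsubmx (ev (lshift m2 i) : 'rV[R]_(m1 + m2)) = ev i.
Proof. by apply/rowP => j; rewrite !mxE eq_lshift. Qed.

Lemma rsubmx_ev_lshift {m1 m2 : nat} (i : 'I_m1) :
  rsubmx (ev (lshift m2 i) : 'rV[R]_(m1 + m2)) = 0.
Proof. by apply/rowP => j; rewrite !mxE eq_lrshift. Qed.

Lemma cone0 {k : nat} {K : set 'rV[R]_k} {x : 'rV[R]_k} : is_cone K -> K x -> K 0.
Proof. by move=> Kcone Kx; rewrite -(scale0r x); apply: Kcone. Qed.

End EuclideanRows.

Section PureImpulses.
Context {R : realType} {n q m1 m2 : nat}.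
Variables (C1 : set 'rV[R]_m1) (C2 : set 'rV[R]_m2) (A : set 'rV[R]_q).
Variables (f : 'rV[R]_n -> 'rV[R]_q -> 'rV[R]_n)
  (g : 'I_(m1 + m2) -> 'rV[R]_n -> 'rV[R]_n)
  (l0 : 'rV[R]_n -> 'rV[R]_q -> R) (l1h : 'rV[R]_n -> R -> 'rV[R]_(m1 + m2) -> R).

Lemma inW_impulse {c : R} {i : 'I_m1} :
  C1 (c *: ev i) -> C2 0 -> `|c| = 1 -> inW C1 C2 0 (c *: ev (lshift m2 i)).
Proof.
move=> C1ci C20 c1; split=> //; split; last by rewrite add0r enormZ enorm_ev c1 mulr1.
by split; rewrite linearZ /= ?lsubmx_ev_lshift ?rsubmx_ev_lshift ?scaler0.
Qed.

Lemma Ham_impulse x p0 p lam (c : R) (j : 'I_(m1 + m2)) a :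
  Ham f g l0 l1h x p0 p 0 lam 0 (c *: ev j) a
  = c * dotv p (g j x) - lam * lext l0 l1h x 0 (c *: ev j) a.
Proof.
by rewrite /Ham mulr0 scale0r add0r sum_evZ add0r dotvZr mul0r addr0.
Qed.

Lemma Hmax0_dot_g_eq0 x p0 p lam (i : 'I_m1) :
  is_cone C2 -> (forall t : R, C1 (t *: ev i)) ->
  Hmax_is C1 C2 A f g l0 l1h x p0 p 0 lam 0 ->
  (forall a, A a -> lam * lext l0 l1h x 0 (ev (lshift m2 i)) a = 0 /\
                    lam * lext l0 l1h x 0 (- ev (lshift m2 i)) a = 0) ->
  dotv p (g (lshift m2 i) x) = 0.
Proof.
move=> C2cone C1line [[w0 [w [a [[_ [[_ C2w] _]] Aa _]]]] Ham_le0] free_impulse.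
have C20 : C2 0 := cone0 C2cone C2w.
have impulse_le0 (c : R) : `|c| = 1 -> lam * lext l0 l1h x 0 (c *: ev (lshift m2 i)) a = 0 ->
    c * dotv p (g (lshift m2 i) x) <= 0.
  move=> c1 free; have := Ham_le0 _ _ _ (inW_impulse (C1line c) C20 c1) Aa.
  by rewrite Ham_impulse free subr0.
have [free_plus free_minus] := free_impulse a Aa.
have le0 : dotv p (g (lshift m2 i) x) <= 0.
  by rewrite -[dotv _ _]mul1r; apply: impulse_le0; rewrite ?normr1 ?scale1r.
have ge0 : 0 <= dotv p (g (lshift m2 i) x).
  by rewrite -oppr_le0 -mulN1r; apply: impulse_le0; rewrite ?normrN1 ?scaleN1r.
by apply/eqP; rewrite eq_le le0 ge0.
Qed.

End PureImpulses.

Theorem mainTheorem3 (R : realType) (n q m1 m2 : nat)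
  (T : set (R * 'rV[R]_n)) (A : set 'rV[R]_q)
  (C1 : set 'rV[R]_m1) (C2 : set 'rV[R]_m2)
  (f : 'rV[R]_n -> 'rV[R]_q -> 'rV[R]_n)
  (g : 'I_(m1 + m2) -> 'rV[R]_n -> 'rV[R]_n)
  (l0 : 'rV[R]_n -> 'rV[R]_q -> R) (l1 : 'rV[R]_n -> 'rV[R]_(m1 + m2) -> R)
  (l1h : 'rV[R]_n -> R -> 'rV[R]_(m1 + m2) -> R)
  (Psi : R * 'rV[R]_n -> R) (K : \bar R) (xc : 'rV[R]_n)
  (S : R) (w0 : R -> R) (w : R -> 'rV[R]_(m1 + m2)) (al : R -> 'rV[R]_q)
  (y0 : R -> R) (y : R -> 'rV[R]_n) (be : R -> R)
  (p0 : R) (p : R -> 'rV[R]_n) (pi lam : R) :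
  standing_hyps T C1 C2 A f g l0 l1 l1h Psi K ->
  extremal_with_multiplier T C1 C2 A f g l0 l1h Psi K xc
    S w0 w al y0 y be p0 p pi lam ->
  canonical_process S w0 w ->
  pi = 0 ->
  (forall s, 0 <= s <= S -> forall (i : 'I_m1) (a : 'rV[R]_q), A a ->
     lam * lext l0 l1h (y s) 0 (ev (lshift m2 i)) a = 0 /\
     lam * lext l0 l1h (y s) 0 (- ev (lshift m2 i)) a = 0) ->
  forall s, 0 <= s <= S -> forall i : 'I_m1,
    dotv (p s) (g (lshift m2 i) (y s)) = 0.
Proof.
move=> [_ [_ [[_ _ C1lines] [[_ C2cone _] _]]]] [_ [_ [_ [_ [_ [_ Hmax0]]]]]] _ pi0.
move=> free_impulses s s_in i; subst pi.
exact: Hmax0_dot_g_eq0 C2cone (C1lines i) (Hmax0 s s_in) (free_impulses s s_in i).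
Qed.
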